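(* The functions $f_k(z)=(1-z)\sum_{j=0}^{\infty}\frac{1}{(j+1)^k}z^j=1+\sum_{j=1}^\infty\left(\frac{1}{(j+1)^k}-\frac{1}{j^k}\right)z^j$, $k\in\mathbb{N}$ ($k\geq1$), span a dense subspace of $H^2$.
   Context: $H^2$ denotes the Hardy space of analytic functions $f(z)=\sum_{j\ge0}\hat f(j)z^j$ on the open unit disk with $\|f\|^2=\sum_{j}|\hat f(j)|^2<\infty$. *)

From HB Require Import structures.
From mathcomp Require Import all_boot all_order all_algebra.
From mathcomp Require Import all_classical all_reals all_analysis.
From mathcomp Require Import complex.
Set Implicit Arguments. Unset Strict Implicit. Unset Printing Implicit Defensive.
Import Order.TTheory GRing.Theory Num.Theory.
Import numFieldNormedType.Exports.
Local Open Scope ring_scope.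

Definition sqmod (R : realType) (z : R[i]) : R :=
  (complex.Re z) ^+ 2 + (complex.Im z) ^+ 2.

(* An element of H^2 is identified with its Taylor coefficient sequence
   (f(z) = sum_j a j z^j); membership: sum_j |a j|^2 < oo. *)
Definition inH2 (R : realType) (a : nat -> R[i]) : Prop :=
  cvgn (series (fun j => sqmod (a j))).

Definition H2norm2 (R : realType) (a : nat -> R[i]) : R :=
  limn (series (fun j => sqmod (a j))).

(* Taylor coefficients of f_k(z) = (1 - z) * sum_j z^j / (j+1)^k :
   coefficient j is 1/(j+1)^k - 1/j^k for j >= 1, and 1 for j = 0. *)
Definition fk_coef (R : realType) (k j : nat) : R[i] :=
  ((((j.+1)%:R ^+ k)^-1 : R) - (if j is j'.+1 then (((j'.+1)%:R ^+ k)^-1 : R) else 0))%:C%C.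

(* Write u_k = ((j+1)^-k)_j, so that f_k = (1 - z) u_k.  For fixed m the sequences
   (m+1)^K u_K = (((m+1)/(j+1))^K)_j equal 1 at j = m and tend to 0 in l^2 on j > m
   as K grows; removing the finitely many coordinates j < m by induction on m shows
   that every unit vector, hence every finitely supported sequence, is an l^2-limit
   of combinations of the u_k.  Multiplication by 1 - z is bounded on l^2, and a
   finitely supported h with sum_j h_j = 0 is 1 - z times the (finitely supported)
   sequence of its partial sums, so such h are limits of combinations of the f_k.
   Finally g in H^2 is close to such an h: keep the first M coefficients of g, whose
   sum is s, and subtract s/L on each of the next L coordinates, at a cost of
   |s|^2/L in squared norm. *)

From HB Require Import structures.
From mathcomp Require Import all_boot all_order all_algebra.
From mathcomp Require Import all_classical all_reals all_analysis.
From mathcomp Require Import complex.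
From mathcomp Require Import ring lra zify.
Import Order.TTheory GRing.Theory Num.Theory.
Import numFieldNormedType.Exports.

Set Implicit Arguments. Unset Strict Implicit. Unset Printing Implicit Defensive.
Local Open Scope ring_scope.

Lemma series_indicator (V : zmodType) (x : V) M L N :
  series (fun j => if (M <= j < M + L)%N then x else 0) N = x *+ (minn N (M + L) - M).
Proof.
elim: N => [|N IH]; first by rewrite /series /= big_geq // min0n sub0n.
rewrite seriesSr IH; case: ifP => /= MN.
  by rewrite -mulrSr; congr (_ *+ _); move: MN => /andP[]; lia.
by rewrite addr0; congr (_ *+ _); move: MN => /negbT; rewrite negb_and -!ltnNge; lia.
Qed.

Lemma series_trunc (V : zmodType) (a : nat -> V) M N : (M <= N)%N ->
  series (fun j => if (j < M)%N then a j else 0) N = series a M.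
Proof.
move=> MN; rewrite /series /= (@big_cat_nat _ _ _ M) // /= [X in _ + X]big1_seq ?addr0.
  by apply: eq_big_nat => j /andP[_ ->].
by move=> j /andP[_]; rewrite mem_index_iota => /andP[Mj _]; rewrite ltnNge Mj.
Qed.

Lemma series_sub (V : zmodType) (a b : nat -> V) N :
  series (fun j => a j - b j) N = series a N - series b N.
Proof. by rewrite /series /= sumrB. Qed.

Lemma inv_sqr_le_telescope (F : realFieldType) (x : F) :
  0 < x -> ((x + 1) ^+ 2)^-1 <= x^-1 - (x + 1)^-1.
Proof.
move=> x0; have x1 : 0 < x + 1 by lra.
have -> : x^-1 - (x + 1)^-1 = (x * (x + 1))^-1.
  by field; rewrite !gt_eqF.
by rewrite lef_pV2 ?posrE ?exprn_gt0 ?mulr_gt0 //; nra.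
Qed.

Lemma sum_inv_sqr_from (F : realFieldType) (m N : nat) :
  \sum_(m.+1 <= j < N) ((j.+1)%:R ^+ 2)^-1 <= (m.+1)%:R^-1 :> F.
Proof.
case: (leqP N m.+1) => Nm; first by rewrite big_geq.
apply: (@le_trans _ _ (\sum_(m.+1 <= j < N) ((j%:R)^-1 - (j.+1)%:R^-1))).
  apply: ler_sum_nat => j /andP[mj _]; rewrite -natr1.
  by apply: inv_sqr_le_telescope; rewrite ltr0n (leq_trans _ mj).
rewrite (eq_bigr (fun j => - ((j.+1)%:R^-1 - j%:R^-1))); last first.
  by move=> j _; rewrite opprB.
by rewrite sumrN telescope_sumr 1?ltnW // opprB gerBl invr_ge0 ler0n.
Qed.

Lemma expr_le_geometric (F : realDomainType) (r q : F) K : 0 <= r <= q ->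
  (r ^+ K.+1) ^+ 2 <= q ^+ (2 * K) * r ^+ 2.
Proof.
move=> /andP[r0 rq]; have q0 := le_trans r0 rq.
rewrite -exprM mulnC exprM exprSr (exprM q) ler_wpM2r ?exprn_ge0 //.
by rewrite lerXn2r ?nnegrE ?exprn_ge0 // lerXn2r ?nnegrE.
Qed.

Section H2Density.
Variable R : realType.
Local Notation C := R[i].

Lemma sqmod_ge0 (a : C) : 0 <= sqmod a.
Proof. by rewrite addr_ge0 ?sqr_ge0. Qed.

Lemma sqmod0 : sqmod (0 : C) = 0.
Proof. by rewrite /sqmod expr0n addr0. Qed.

Lemma sqmod_real (x : R) : sqmod x%:C%C = x ^+ 2.
Proof. by rewrite /sqmod expr0n addr0. Qed.

Lemma sqmodN (a : C) : sqmod (- a) = sqmod a.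
Proof. by case: a => a1 a2; rewrite /sqmod /= !sqrrN. Qed.

Lemma sqmodM (a b : C) : sqmod (a * b) = sqmod a * sqmod b.
Proof. by case: a b => [a1 a2] [b1 b2]; rewrite /sqmod /=; ring. Qed.

Lemma sqmodD_le (a b : C) : sqmod (a + b) <= 2 * sqmod a + 2 * sqmod b.
Proof.
case: a b => [a1 a2] [b1 b2]; rewrite /sqmod /=.
by have := sqr_ge0 (a1 - b1); have := sqr_ge0 (a2 - b2); nra.
Qed.

(* ||a||^2 <= e, stated on partial sums so that a need not be known to be in H^2 *)
Definition l2_le (a : nat -> C) (e : R) :=
  forall N, series (fun j => sqmod (a j)) N <= e.

Lemma eq_l2_le (a b : nat -> C) e : a =1 b -> l2_le a e -> l2_le b e.
Proof. by move=> /funext ->. Qed.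

Lemma l2_le_trans (a : nat -> C) e e' : l2_le a e -> e <= e' -> l2_le a e'.
Proof. by move=> ha ee' N; apply: le_trans ee'. Qed.

Lemma l2_le0 e : 0 <= e -> l2_le (fun=> 0) e.
Proof. by move=> e0 N; rewrite /series /= big1 // => j _; rewrite sqmod0. Qed.

Lemma l2_leD (a b : nat -> C) e1 e2 : l2_le a e1 -> l2_le b e2 ->
  l2_le (fun j => a j + b j) (2 * e1 + 2 * e2).
Proof.
move=> ha hb N; rewrite /series /=.
apply: le_trans (ler_sum _ (fun j _ => sqmodD_le (a j) (b j))) _.
by rewrite big_split -!mulr_sumr /= lerD // ler_wpM2l //; [apply: ha | apply: hb].
Qed.

Lemma l2_leN (a : nat -> C) e : l2_le a e -> l2_le (fun j => - a j) e.
Proof.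
by move=> ha N; rewrite /series /=; under eq_bigr do rewrite sqmodN; apply: ha.
Qed.

Lemma l2_leZ c (a : nat -> C) e : l2_le a e -> l2_le (fun j => c * a j) (sqmod c * e).
Proof.
move=> ha N; rewrite /series /=.
under eq_bigr do rewrite sqmodM.
by rewrite -mulr_sumr ler_wpM2l ?sqmod_ge0 //; apply: ha.
Qed.

Lemma H2norm2_le (a : nat -> C) e : l2_le a e -> H2norm2 a <= e.
Proof.
move=> ha; have incr : nondecreasing_seq (series (fun j => sqmod (a j))).
  by apply: nondecreasing_series => j _ _; apply: sqmod_ge0.
apply: limr_le; last exact: nearW.
by apply: nondecreasing_is_cvgn => //; exists e => _ [N _ <-].
Qed.

Lemma series_sqmod_tail (a : nat -> C) M N :
  series (fun j => sqmod (if (M <= j)%N then a j else 0)) N =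
  \sum_(M <= j < N) sqmod (a j).
Proof.
rewrite /series /=; case: (leqP N M) => NM.
  rewrite [RHS]big_geq // big1_seq // => j /andP[_].
  rewrite mem_index_iota => /andP[_ jN].
  by rewrite leqNgt (leq_trans jN NM) sqmod0.
rewrite (@big_cat_nat _ _ _ M) ?(ltnW NM) // /= big1_seq ?add0r.
  by apply: eq_big_nat => j /andP[Mj _]; rewrite Mj.
by move=> j /andP[_]; rewrite mem_index_iota => /andP[_ jM]; rewrite leqNgt jM sqmod0.
Qed.

Lemma inH2_tail (g : nat -> C) e : inH2 g -> 0 < e ->
  exists M, l2_le (fun j => if (M <= j)%N then g j else 0) e.
Proof.
set S := series (fun j => sqmod (g j)) => hg e0.
have incr : nondecreasing_seq S.
  by apply: nondecreasing_series => j _ _; apply: sqmod_ge0.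
have [M _ HM] := (cvgrPdist_le _ _).1 hg _ e0.
have SM_le : limn S - S M <= e := le_trans (ler_norm _) (HM M (leqnn M)).
exists M => N; rewrite series_sqmod_tail; case: (leqP N M) => NM.
  by rewrite big_geq // (le_trans _ SM_le) // subr_ge0 nondecreasing_cvgn_le.
rewrite -sub_series_geq 1?ltnW // (le_trans _ SM_le) // lerB //.
exact: nondecreasing_cvgn_le.
Qed.

Definition in_span (u : nat -> nat -> C) (v : nat -> C) :=
  exists n (c : nat -> C), v = fun j => \sum_(i < n) c i * u i j.

Definition approx_span (u : nat -> nat -> C) (w : nat -> C) :=
  forall e, 0 < e -> exists2 v, in_span u v & l2_le (fun j => w j - v j) e.

Section Span.
Variable u : nat -> nat -> C.

Lemma in_span0 : in_span u (fun=> 0).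
Proof. by exists 0%N, (fun=> 0); apply: funext => j; rewrite big_ord0. Qed.

Lemma in_span_gen k : in_span u (u k).
Proof.
exists k.+1, (fun i => (i == k)%:R); apply: funext => j.
rewrite big_ord_recr /= eqxx mul1r big1 ?add0r // => i _.
by rewrite (ltn_eqF (ltn_ord i)) mul0r.
Qed.

Lemma in_spanZ a v : in_span u v -> in_span u (fun j => a * v j).
Proof.
move=> [n [c ->]]; exists n, (fun i => a * c i); apply: funext => j.
by rewrite mulr_sumr; apply: eq_bigr => i _; rewrite mulrA.
Qed.

Lemma sum_span_widen n m (c : nat -> C) j : (n <= m)%N ->
  \sum_(i < n) c i * u i j = \sum_(i < m) (if (i < n)%N then c i else 0) * u i j.
Proof.
move=> nm; rewrite (big_ord_widen m (fun i => c i * u i j) nm) big_mkcond.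
by apply: eq_bigr => i _; case: ifP; rewrite ?mul0r.
Qed.

Lemma in_spanD v1 v2 : in_span u v1 -> in_span u v2 -> in_span u (fun j => v1 j + v2 j).
Proof.
move=> [n1 [c1 ->]] [n2 [c2 ->]]; exists (maxn n1 n2).
exists (fun i => (if (i < n1)%N then c1 i else 0) + (if (i < n2)%N then c2 i else 0)).
apply: funext => j; rewrite (sum_span_widen c1 j (leq_maxl n1 n2)).
rewrite (sum_span_widen c2 j (leq_maxr n1 n2)) -big_split /=.
by apply: eq_bigr => i _; rewrite mulrDl.
Qed.

Lemma in_span_approx v : in_span u v -> approx_span u v.
Proof.
move=> hv e e0; exists v => //.
by apply: eq_l2_le (l2_le0 (ltW e0)) => j; rewrite subrr.
Qed.

Lemma approx_span_closed w :
  (forall e, 0 < e -> exists2 x, approx_span u x & l2_le (fun j => w j - x j) e) ->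
  approx_span u w.
Proof.
move=> hw e e0; have e40 : 0 < e / 4 by rewrite divr_gt0.
have [x ax wx] := hw _ e40; have [v sv xv] := ax _ e40.
exists v => //; apply: eq_l2_le (l2_le_trans (l2_leD wx xv) _).
  by move=> j; rewrite addrA subrK.
lra.
Qed.

Lemma approx_spanD w1 w2 : approx_span u w1 -> approx_span u w2 ->
  approx_span u (fun j => w1 j + w2 j).
Proof.
move=> h1 h2 e e0; have e40 : 0 < e / 4 by rewrite divr_gt0.
have [v1 s1 m1] := h1 _ e40; have [v2 s2 m2] := h2 _ e40.
exists (fun j => v1 j + v2 j); first exact: in_spanD.
apply: eq_l2_le (l2_le_trans (l2_leD m1 m2) _).
  by move=> j; rewrite opprD addrACA.
lra.
Qed.

Lemma approx_spanZ a w : approx_span u w -> approx_span u (fun j => a * w j).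
Proof.
move=> hw e e0; have a1 : 0 < sqmod a + 1 by rewrite ltr_wpDl ?sqmod_ge0.
have [v sv wv] := hw _ (divr_gt0 e0 a1).
exists (fun j => a * v j); first exact: in_spanZ.
apply: eq_l2_le (l2_le_trans (l2_leZ a wv) _).
  by move=> j; rewrite mulrBr.
by rewrite mulrA ler_pdivrMr // mulrDr mulr1 mulrC lerDl ltW.
Qed.

Lemma approx_span_sum n (w : nat -> nat -> C) :
  (forall i, (i < n)%N -> approx_span u (w i)) ->
  approx_span u (fun j => \sum_(i < n) w i j).
Proof.
elim: n => [|n IH] hw.
  by under [fun j => _]funext do rewrite big_ord0; apply/in_span_approx/in_span0.
under [fun j => _]funext do rewrite big_ord_recr.
by apply: approx_spanD; [apply: IH => i /ltnW; apply: hw | apply: hw].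
Qed.

End Span.

(* coefficients of Li_k(z)/z, so that f_k = (1 - z) Li_k(z)/z *)
Definition polylog_coef (k j : nat) : C := (((j.+1)%:R ^+ k)^-1 : R)%:C%C.

Local Notation polylogs := (fun k => polylog_coef k.+1).

Definition delta (m j : nat) : C := if j == m then 1 else 0.

Lemma sum_delta n (c : nat -> C) j :
  \sum_(i < n) c i * delta i j = if (j < n)%N then c j else 0.
Proof.
elim: n => [|n IH]; first by rewrite big_ord0.
rewrite big_ord_recr /= IH /delta ltnS.
by case: ltngtP => [_|_|->]; rewrite ?mulr1 ?mulr0 ?add0r ?addr0.
Qed.

Definition polylog_tail (m K j : nat) : C :=
  if (m < j)%N then ((((m.+1)%:R / (j.+1)%:R) ^+ K : R))%:C%C else 0.

Lemma l2_le_polylog_tail m K :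
  l2_le (polylog_tail m K.+1) (((m.+1)%:R / (m.+2)%:R) ^+ (2 * K) * (m.+1)%:R).
Proof.
set a : R := (m.+1)%:R; set c : R := _ ^+ (2 * K).
have a0 : 0 < a by rewrite ltr0n.
have c0 : 0 <= c by rewrite exprn_ge0 ?divr_ge0.
move=> N; rewrite series_sqmod_tail.
apply: (@le_trans _ _ (\sum_(m.+1 <= j < N) c * (a / (j.+1)%:R) ^+ 2)).
  apply: ler_sum_nat => j /andP[mj _]; rewrite sqmod_real expr_le_geometric //.
  by rewrite divr_ge0 ?ler_pM2l // ?lef_pV2 ?posrE ?ltr0n ?ler_nat.
rewrite -mulr_sumr ler_wpM2l //.
rewrite (eq_bigr (fun j => a ^+ 2 * ((j.+1)%:R ^+ 2)^-1)); last first.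
  by move=> j _; rewrite expr_div_n.
rewrite -mulr_sumr; apply: le_trans (ler_wpM2l (sqr_ge0 a) (@sum_inv_sqr_from R m N)) _.
by rewrite expr2 -mulrA mulfV ?mulr1 // gt_eqF.
Qed.

Lemma polylog_tail_small m e : 0 < e -> exists K, l2_le (polylog_tail m K.+1) e.
Proof.
move=> e0; set a : R := (m.+1)%:R; set q : R := a / (m.+2)%:R.
have a0 : 0 < a by rewrite ltr0n.
have q0 : 0 <= q ^+ 2 by rewrite sqr_ge0.
have q1 : `|q ^+ 2| < 1.
  rewrite ger0_norm // expr_div_n ltr_pdivrMr ?exprn_gt0 ?ltr0n // mul1r.
  by rewrite ltrXn2r ?nnegrE ?ler0n // ltr_nat.
have [K _ HK] := (cvgrPdist_le _ _).1 (cvg_expr q1) _ (divr_gt0 e0 a0).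
exists K; apply: l2_le_trans (l2_le_polylog_tail m K) _.
have := HK K (leqnn K); rewrite /= sub0r normrN ger0_norm ?(exprn_ge0 K q0) //.
by rewrite -/a -/q exprM ler_pdivlMr.
Qed.

Lemma approx_delta m : approx_span polylogs (delta m).
Proof.
elim/ltn_ind: m => m IH; apply: approx_span_closed => e e0.
have [K tailK] := polylog_tail_small m e0.
pose s j := (((m.+1)%:R ^+ K.+1 : R)%:C)%C * polylog_coef K.+1 j.
have sE j : s j = ((((m.+1)%:R / (j.+1)%:R) ^+ K.+1 : R))%:C%C.
  by rewrite /s /polylog_coef -rmorphM expr_div_n.
exists (fun j => s j + \sum_(i < m) - s i * delta i j).
  have s_span : in_span polylogs s := in_spanZ _ (in_span_gen _ K).
  apply: approx_spanD; first exact: in_span_approx.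
  apply: (approx_span_sum (w := fun i j => - s i * delta i j)) => i im.
  exact/approx_spanZ/IH.
apply: eq_l2_le (l2_leN tailK) => j.
rewrite (sum_delta _ (fun i => - s i)) /polylog_tail /delta sE.
case: ltngtP => [_|_|->].
- by rewrite addr0 sub0r.
- by rewrite subrr subr0 oppr0.
- by rewrite divff ?pnatr_eq0 // expr1n addr0 subrr oppr0.
Qed.

Lemma approx_span_finite (w : nat -> C) P :
  (forall j, (P <= j)%N -> w j = 0) -> approx_span polylogs w.
Proof.
move=> wP; have -> : w = fun j => \sum_(i < P) w i * delta i j.
  by apply: funext => j; rewrite sum_delta; case: ltnP => // /wP.
apply: (approx_span_sum (w := fun i j => w i * delta i j)) => i _.
exact/approx_spanZ/approx_delta.
Qed.

Local Notation fks := (fun k => fk_coef R k.+1).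

(* coefficients of (1 - z) a(z) *)
Definition bdiff (a : nat -> C) (j : nat) : C := a j - (if j is j'.+1 then a j' else 0).

Lemma fk_coefE k j : fk_coef R k j = bdiff (polylog_coef k) j.
Proof.
by rewrite /fk_coef /bdiff /polylog_coef; case: j => [|j]; rewrite rmorphB ?rmorph0.
Qed.

Lemma bdiffB (a b : nat -> C) j : bdiff (fun j => a j - b j) j = bdiff a j - bdiff b j.
Proof. by rewrite /bdiff; case: j => [|j]; rewrite ?subr0 // !opprD !opprK addrACA. Qed.

Lemma bdiff_sum n (c : nat -> C) (u : nat -> nat -> C) j :
  bdiff (fun j => \sum_(i < n) c i * u i j) j = \sum_(i < n) c i * bdiff (u i) j.
Proof.
rewrite /bdiff; case: j => [|j]; rewrite ?subr0 -?sumrB; apply: eq_bigr => i _.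
  by rewrite subr0.
by rewrite mulrBr.
Qed.

Lemma bdiff_series (h : nat -> C) j : bdiff (fun j => series h j.+1) j = h j.
Proof.
rewrite /bdiff; case: j => [|j]; last exact: seriesSB.
by rewrite subr0 /series /= big_nat1.
Qed.

Lemma l2_le_shift (a : nat -> C) e :
  l2_le a e -> l2_le (fun j => if j is j'.+1 then a j' else 0) e.
Proof.
move=> ha [|N]; first by have := ha 0%N; rewrite /series /= !big_geq.
by rewrite /series /= big_nat_recl // sqmod0 add0r; apply: ha.
Qed.

Lemma l2_le_bdiff (a : nat -> C) e : l2_le a e -> l2_le (bdiff a) (4 * e).
Proof.
move=> ha; apply: eq_l2_le (l2_le_trans (l2_leD ha (l2_leN (l2_le_shift ha))) _) => //.
lra.
Qed.

Lemma in_span_bdiff v : in_span polylogs v -> in_span fks (bdiff v).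
Proof.
move=> [n [c ->]]; exists n, c; apply: funext => j.
by rewrite (@bdiff_sum n c polylogs j); apply: eq_bigr => i _; rewrite fk_coefE.
Qed.

Lemma approx_span_bdiff w : approx_span polylogs w -> approx_span fks (bdiff w).
Proof.
move=> hw e e0; have [v sv wv] := hw _ (divr_gt0 e0 (ltr0Sn _ 3)).
exists (bdiff v); first exact: in_span_bdiff.
apply: eq_l2_le (l2_le_trans (l2_le_bdiff wv) _) => [j|]; first exact: bdiffB.
by rewrite mulrC divfK.
Qed.

Lemma approx_span_zero_sum (h : nat -> C) P :
  (forall j, (P <= j)%N -> h j = 0) -> series h P = 0 -> approx_span fks h.
Proof.
move=> hP h0; have -> : h = bdiff (fun j => series h j.+1).
  by apply: funext => j; rewrite bdiff_series.
apply/approx_span_bdiff/(approx_span_finite (P := P)) => j Pj.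
have := sub_series_geq h (leqW Pj); rewrite h0 subr0 => ->.
by rewrite big_nat_cond big1 // => k /andP[/andP[Pk _] _]; apply: hP.
Qed.

Lemma l2_le_indicator (c : C) M L :
  l2_le (fun j => if (M <= j < M + L)%N then c else 0) (sqmod c *+ L).
Proof.
move=> N; have -> : (fun j => sqmod (if (M <= j < M + L)%N then c else 0)) =
                    fun j => if (M <= j < M + L)%N then sqmod c else 0.
  by apply: funext => j; case: ifP; rewrite ?sqmod0.
by rewrite series_indicator ler_wpMn2l ?sqmod_ge0 //; lia.
Qed.

Lemma inH2_approx_span_fk (g : nat -> C) : inH2 g -> approx_span fks g.
Proof.
move=> hg; apply: approx_span_closed => e e0.
have e40 : 0 < e / 4 by rewrite divr_gt0.
have [M tailM] := inH2_tail hg e40.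
pose s := series g M; pose L := (Num.trunc (sqmod s / (e / 4))).+1.
have L0 : 0 < L%:R :> R by rewrite ltr0n.
pose c : C := ((L%:R^-1 : R)%:C)%C * s.
pose spread j := if (M <= j < M + L)%N then c else 0.
have cL : c *+ L = s.
  by rewrite -mulrnAl -rmorphMn -mulr_natl mulfV ?gt_eqF // rmorph1 mul1r.
have spread_small : l2_le spread (e / 4).
  apply: l2_le_trans (l2_le_indicator c M L) _.
  have -> : sqmod c *+ L = sqmod s / L%:R.
    by rewrite /c sqmodM sqmod_real -mulr_natl; field; rewrite gt_eqF.
  rewrite ler_pdivrMr // mulrC -ler_pdivrMr //; exact/ltW/truncnS_gt.
exists (fun j => (if (j < M)%N then g j else 0) - spread j).
  apply: (approx_span_zero_sum (P := M + L)) => [j MLj|].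
    have Mj : (M <= j)%N by apply: leq_trans MLj; apply: leq_addr.
    by rewrite /spread ltnNge Mj [(j < _)%N]ltnNge MLj andbF subr0.
  rewrite series_sub series_trunc ?leq_addr // series_indicator minnn addKn.
  by rewrite cL subrr.
apply: eq_l2_le (l2_le_trans (l2_leD tailM spread_small) _) => [j|]; last lra.
rewrite /spread; case: (leqP M j) => Mj.
  by rewrite andTb sub0r opprK.
by rewrite andFb add0r subr0 subrr.
Qed.

End H2Density.

Theorem mainTheorem12 (R : realType) (g : nat -> R[i]) (hg : inH2 g)
    (eps : R) (heps : 0 < eps) :
  exists (n : nat) (c : 'I_n -> R[i]),
    H2norm2 (fun j => g j - \sum_(i < n) c i * fk_coef R i.+1 j) < eps.
Proof.
have [v [n [c ->]] gv] := inH2_approx_span_fk hg (divr_gt0 heps (ltr0Sn _ 1)).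
exists n, (fun i => c i); apply: le_lt_trans (H2norm2_le gv) _.
by rewrite ltr_pdivrMr // ltr_pMr // ltr1n.
Qed.
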